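(* Let $K$ be a field with a non-trivial non-Archimedean valuation $|\cdot|$, let $X$ be a complete non-Archimedean normed space over $K$, and let $G$ be an additive (abelian) group. Fix $k\in\mathbb N$, and assume $|2k^3|\neq 0$. For $f:G\to X$ define $$Df(x,y)=f(kx+y)+f(kx-y)-k[f(x+y)+f(x-y)]-2(k^3-k)f(x)\qquad (x,y\in G).$$ Let $\varphi:G\times G\to[0,\infty)$ be a function such that $$\lim_{n\to\infty}\frac{\varphi(k^nx,k^ny)}{|k|^{3n}}=0\quad\text{for all }x,y\in G,$$ and such that for each $x\in G$ the limit $$\tilde\varphi(x):=\lim_{n\to\infty}\max\Big\{\frac{\varphi(k^jx,0)}{|k|^{3j}}:\ 0\le j<n\Big\}$$ exists. Suppose $f:G\to X$ satisfies $\|Df(x,y)\|\le\varphi(x,y)$ for all $x,y\in G$. Then there exists a cubic mapping $C:G\to X$ (i.e. $DC(x,y)=0$ for all $x,y\in G$) such that $$\|C(x)-f(x)\|\le\frac{1}{|2k^3|}\tilde\varphi(x)\quad\text{for all }x\in G.$$ Moreover, if $$\lim_{i\to\infty}\lim_{n\to\infty}\max\Big\{\frac{\varphi(k^jx,0)}{|k|^{3j}}:\ i\le j<n+i\Big\}=0\quad\text{for all }x\in G,$$ then $C$ is the unique cubic mapping satisfying this inequality.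
   Context: A non-Archimedean field is a field $K$ with a function $|\cdot|:K\to[0,\infty)$ such that $|r|=0$ iff $r=0$, $|rs|=|r||s|$, and $|r+s|\le\max\{|r|,|s|\}$. A non-Archimedean norm on a $K$-vector space $X$ is a function $\|\cdot\|:X\to\mathbb R$ with $\|x\|=0$ iff $x=0$, $\|rx\|=|r|\|x\|$, and $\|x+y\|\le\max\{\|x\|,\|y\|\}$; complete means every Cauchy sequence converges. Integers are regarded as elements of $K$, and $|k|$ denotes the valuation of $k$ in $K$. *)

From HB Require Import structures.
From mathcomp Require Import all_boot all_order all_algebra.
From mathcomp Require Import all_classical all_reals all_analysis.
From mathcomp Require Import Rstruct Rstruct_topology.
From Stdlib Require Rdefinitions.
Notation R := Rdefinitions.R.
Set Implicit Arguments. Unset Strict Implicit. Unset Printing Implicit Defensive.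
Import Order.TTheory GRing.Theory Num.Theory.
Local Open Scope ring_scope.

Definition nonarch_abs (K : fieldType) (a : K -> R) : Prop :=
  [/\ (forall r, 0 <= a r),
      (forall r, a r = 0 <-> r = 0),
      (forall r s, a (r * s) = a r * a s) &
      (forall r s, a (r + s) <= Num.max (a r) (a s))].

Definition nontrivial_abs (K : fieldType) (a : K -> R) : Prop :=
  exists r : K, a r != 0 /\ a r != 1.

Definition nonarch_norm (K : fieldType) (a : K -> R) (X : lmodType K)
  (nrm : X -> R) : Prop :=
  [/\ (forall x, nrm x = 0 <-> x = 0),
      (forall (r : K) x, nrm (r *: x) = a r * nrm x) &
      (forall x y, nrm (x + y) <= Num.max (nrm x) (nrm y))].

Definition complete_norm (K : fieldType) (X : lmodType K) (nrm : X -> R) : Prop :=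
  forall u : nat -> X,
    (forall e : R, 0 < e -> exists N : nat, forall m n : nat, (N <= m)%N -> (N <= n)%N ->
        nrm (u m - u n) < e) ->
    exists l : X, forall e : R, 0 < e -> exists N : nat, forall n : nat, (N <= n)%N ->
        nrm (u n - l) < e.

Definition Dop (G : zmodType) (K : fieldType) (X : lmodType K) (k : nat)
  (f : G -> X) (x y : G) : X :=
  f (x *+ k + y) + f (x *+ k - y) - (f (x + y) + f (x - y)) *+ k
  - f x *+ (2 * (k ^ 3 - k)).

Definition cubic (G : zmodType) (K : fieldType) (X : lmodType K) (k : nat)
  (f : G -> X) : Prop := forall x y, Dop k f x y = 0.

(** max { phi(k^j x, 0) / |k|^(3j) : i <= j < n + i }  (0 for an empty range;
    all terms are nonnegative). *)
Definition maxterm (G : zmodType) (k : nat) (ak : R) (phi : G -> G -> R)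
  (x : G) (i n : nat) : R :=
  \big[Num.max/0]_(i <= j < n + i) (phi (x *+ (k ^ j)) 0 / ak ^+ (3 * j)).

From HB Require Import structures.
From mathcomp Require Import all_boot all_order all_algebra.
From mathcomp Require Import all_classical all_reals all_analysis.
From mathcomp Require Import Rstruct Rstruct_topology.
From mathcomp Require Import ring lra zify.
From Stdlib Require Rdefinitions.
Local Notation R := Rdefinitions.R.
Import Order.TTheory GRing.Theory Num.Theory.
Local Open Scope classical_set_scope.
Local Open Scope ring_scope.

Set Implicit Arguments.
Unset Strict Implicit.
Unset Printing Implicit Defensive.

(* Hyers' direct method. Putting y = 0 gives
   ||f(kx) - k^3 f(x)|| <= phi(x,0) / |2|, so the consecutive differences of
   A_n(x) = f(k^n x) / k^(3n) are bounded by phi(k^n x, 0) / (|k|^(3n) |2k^3|).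
   By the ultrametric inequality a telescoping sum is bounded by the largest of
   its terms, not by their sum: this makes (A_n(x)) Cauchy and bounds
   ||A_n(x) - f(x)|| by maxterm(x, 0, n) / |2k^3|, hence the limit C stays within
   phit(x) / |2k^3| of f. Since D A_n(x,y) = D f(k^n x, k^n y) / k^(3n), the
   limit is cubic. A cubic map satisfies C(k^n x) = k^(3n) C(x), so two
   solutions differ at x by at most phit(k^n x) / (|k|^(3n) |2k^3|), which is
   the inner limit L_n of the uniqueness hypothesis and tends to 0. *)

Section NonArchimedeanAbs.
Variables (K : fieldType) (a : K -> R).
Hypothesis ha : nonarch_abs a.

Lemma abs_ge0 x : 0 <= a x. Proof. by case: ha. Qed.

Lemma abs_eq0 x : a x = 0 <-> x = 0. Proof. by case: ha. Qed.

Lemma absM x y : a (x * y) = a x * a y. Proof. by case: ha. Qed.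

Lemma abs0 : a 0 = 0. Proof. exact/abs_eq0. Qed.

Lemma abs_gt0 x : x != 0 -> 0 < a x.
Proof. by move=> x0; rewrite lt_def abs_ge0 andbT; apply: contra x0 => /eqP/abs_eq0->. Qed.

Lemma abs1 : a 1 = 1.
Proof.
have a1_neq0 : a 1 != 0 by rewrite gt_eqF // abs_gt0 // oner_eq0.
by apply: (mulfI a1_neq0); rewrite -absM !mulr1.
Qed.

Lemma absN1 : a (-1) = 1.
Proof.
apply/eqP; rewrite -(sqrp_eq1 (abs_ge0 _)) expr2 -absM.
by rewrite mulrNN mulr1 abs1.
Qed.

Lemma absX x n : a (x ^+ n) = a x ^+ n.
Proof. by elim: n => [|n IHn]; rewrite ?abs1 // !exprS absM IHn. Qed.

Lemma absV x : x != 0 -> a x^-1 = (a x)^-1.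
Proof.
move=> x0; apply: (mulfI (lt0r_neq0 (abs_gt0 x0))).
by rewrite -absM !mulfV ?abs1 // lt0r_neq0 // abs_gt0.
Qed.

Lemma abs_natr_le1 n : a n%:R <= 1.
Proof.
elim: n => [|n IHn]; first by rewrite abs0.
have [_ _ _ aD] := ha.
by rewrite -natr1; apply: le_trans (aD _ _) _; rewrite ge_max IHn abs1 lexx.
Qed.

End NonArchimedeanAbs.

Section CubicOperator.
Variables (G : zmodType) (K : fieldType) (X : lmodType K) (k : nat).

Lemma DopB (f g : G -> X) x y :
  Dop k (fun z => f z - g z) x y = Dop k f x y - Dop k g x y.
Proof.
rewrite /Dop !mulrnBl !mulrnDl !opprD !opprK !addrA !mulNrn !opprK.
(* Interleave the five [f]-terms with the five [g]-terms. *)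
by rewrite [RHS](ACl (1*6*2*7*3*8*4*9*5*10)%AC).
Qed.

Lemma Dop_scale_natmul (f : G -> X) (s : K) m x y :
  Dop k (fun z => s *: f (z *+ m)) x y = s *: Dop k f (x *+ m) (y *+ m).
Proof.
rewrite /Dop !scalerBr !scalerDr -!scalerMnr !scalerDr.
by rewrite !mulrnDl !mulNrn (mulrnAC x k m).
Qed.

Lemma Dop_y0 (f : G -> X) x : Dop k f x 0 = 2%:R *: (f (x *+ k) - k%:R ^+ 3 *: f x).
Proof.
have k_le_k3 : (k <= k ^ 3)%N by case: k => // n; rewrite expnS leq_pmulr // expn_gt0.
rewrite /Dop addr0 subr0 addr0 subr0 scalerBr scalerA -natrX -natrM !scaler_nat.
by rewrite -!mulr2n -mulrnA -addrA -opprD -mulrnDr -mulnDr subnKC.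
Qed.

Lemma cubic_homogeneous (g : G -> X) : (2%:R : K) != 0 -> cubic k g ->
  forall z n, g (z *+ k ^ n) = (k%:R ^+ 3) ^+ n *: g z.
Proof.
move=> two_neq0 gC z; elim=> [|n IHn]; first by rewrite expn0 mulr1n expr0 scale1r.
have /eqP := gC (z *+ k ^ n) 0.
rewrite Dop_y0 scaler_eq0 (negbTE two_neq0) subr_eq0 => /eqP gk.
by rewrite expnSr mulrnA gk IHn scalerA -exprS.
Qed.

End CubicOperator.

Section NonArchimedeanNorm.
Variables (K : fieldType) (a : K -> R) (X : lmodType K) (nrm : X -> R).
Hypotheses (ha : nonarch_abs a) (hn : nonarch_norm a nrm).

Lemma nrm_eq0 x : nrm x = 0 <-> x = 0. Proof. by case: hn. Qed.

Lemma nrmZ r x : nrm (r *: x) = a r * nrm x. Proof. by case: hn. Qed.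

Lemma nrm0 : nrm 0 = 0. Proof. exact/nrm_eq0. Qed.

Lemma nrmN x : nrm (- x) = nrm x.
Proof. by rewrite -scaleN1r nrmZ absN1 // mul1r. Qed.

Lemma nrmBC x y : nrm (x - y) = nrm (y - x).
Proof. by rewrite -nrmN opprB. Qed.

Lemma nrmD_le x y (B : R) : nrm x <= B -> nrm y <= B -> nrm (x + y) <= B.
Proof. by have [_ _ nD] := hn; move=> xB yB; apply: le_trans (nD _ _) _; rewrite ge_max xB. Qed.

Lemma nrmB_le x y (B : R) : nrm x <= B -> nrm y <= B -> nrm (x - y) <= B.
Proof. by move=> xB yB; apply: nrmD_le; rewrite ?nrmN. Qed.

Lemma nrm_ge0 x : 0 <= nrm x.
Proof.
have := nrmB_le (lexx (nrm x)) (lexx (nrm x)).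
by rewrite subrr nrm0.
Qed.

Lemma nrmMn_le x m : nrm (x *+ m) <= nrm x.
Proof.
rewrite -scaler_nat nrmZ -[leRHS]mul1r.
by rewrite ler_wpM2r ?nrm_ge0 ?abs_natr_le1.
Qed.

Lemma nrm_telescope_le (u : nat -> X) m n (B : R) : 0 <= B -> (m <= n)%N ->
  (forall j, (m <= j < n)%N -> nrm (u j.+1 - u j) <= B) -> nrm (u n - u m) <= B.
Proof.
move=> B_ge0; elim: n => [|n IHn]; first by rewrite leqn0 => /eqP->; rewrite subrr nrm0.
rewrite leq_eqVlt => /predU1P [-> _|]; first by rewrite subrr nrm0.
rewrite ltnS => mn uB.
have -> : u n.+1 - u m = (u n.+1 - u n) + (u n - u m) by rewrite addrA subrK.
apply: nrmD_le; first by apply: uB; rewrite mn ltnSn.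
by apply: IHn => // j /andP [mj jn]; apply: uB; rewrite mj (leqW jn).
Qed.

Definition nrm_cvg (u : nat -> X) (l : X) :=
  forall e : R, 0 < e -> exists N, forall n, (N <= n)%N -> nrm (u n - l) < e.

Lemma nrm_cvg_le (u : nat -> X) l v (B : R) : nrm_cvg u l ->
  (exists N, forall n, (N <= n)%N -> nrm (u n - v) <= B) -> nrm (l - v) <= B.
Proof.
move=> ul [N uvB]; apply/ler_addgt0Pr => e e_gt0.
have [M ulM] := ul e e_gt0.
have B_ge0 : 0 <= B := le_trans (nrm_ge0 _) (uvB _ (leqnn N)).
have -> : l - v = (l - u (maxn N M)) + (u (maxn N M) - v) by rewrite addrA subrK.
have := ulM _ (leq_maxr N M); have := uvB _ (leq_maxl N M).
by rewrite [nrm (_ - l)]nrmBC => *; apply: nrmD_le; lra.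
Qed.

Lemma nrm_Dop_le (G : zmodType) k (g : G -> X) x y B :
  nrm (g (x *+ k + y)) <= B -> nrm (g (x *+ k - y)) <= B -> nrm (g (x + y)) <= B ->
  nrm (g (x - y)) <= B -> nrm (g x) <= B -> nrm (Dop k g x y) <= B.
Proof.
have MnB v m : nrm v <= B -> nrm (v *+ m) <= B by apply: le_trans (nrmMn_le _ _).
move=> h1 h2 h3 h4 h5; rewrite /Dop.
by apply: nrmB_le; [apply: nrmB_le; [apply: nrmD_le | apply: MnB; apply: nrmD_le] | apply: MnB].
Qed.

Lemma nrm_cvg_Dop (G : zmodType) k (u : nat -> G -> X) (C : G -> X) x y :
  (forall z, nrm_cvg (u ^~ z) (C z)) -> nrm_cvg (fun n => Dop k (u n) x y) (Dop k C x y).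
Proof.
move=> uC e e_gt0; have e2_gt0 : 0 < e / 2 by rewrite divr_gt0.
have [N1 h1] := uC (x *+ k + y) _ e2_gt0; have [N2 h2] := uC (x *+ k - y) _ e2_gt0.
have [N3 h3] := uC (x + y) _ e2_gt0; have [N4 h4] := uC (x - y) _ e2_gt0.
have [N5 h5] := uC x _ e2_gt0.
exists (N1 + N2 + N3 + N4 + N5)%N => n n_ge; rewrite -DopB.
have e2_lt_e : e / 2 < e by lra.
apply: le_lt_trans e2_lt_e; apply: nrm_Dop_le; apply: ltW;
  [apply: h1 | apply: h2 | apply: h3 | apply: h4 | apply: h5]; lia.
Qed.

End NonArchimedeanNorm.

Section MaxTerm.
Variables (G : zmodType) (k : nat) (c : R) (phi : G -> G -> R) (x : G).
Local Notation term j := (phi (x *+ k ^ j) 0 / c ^+ (3 * j)).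

Lemma maxterm_ge0 i n : 0 <= maxterm k c phi x i n.
Proof. exact: bigmax_ge_id. Qed.

Lemma le_maxterm i n j : (i <= j < n + i)%N -> term j <= maxterm k c phi x i n.
Proof.
move=> ij; apply: (le_bigmax_seq 0 j xpredT) => //.
by rewrite mem_index_iota.
Qed.

Lemma maxterm_le i n B : 0 <= B ->
  (forall j, (i <= j < n + i)%N -> term j <= B) -> maxterm k c phi x i n <= B.
Proof.
move=> B_ge0 termB; rewrite /maxterm big_nat_cond.
by apply: bigmax_le => // j /andP[/termB].
Qed.

Lemma maxterm_homo i : {homo maxterm k c phi x i : m n / (m <= n)%N >-> m <= n}.
Proof.
move=> m n mn; apply: maxterm_le => [|j ij]; first exact: maxterm_ge0.
by apply: le_maxterm; lia.
Qed.

Lemma maxterm_shift n m : 0 < c ->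
  maxterm k c phi (x *+ k ^ n) 0 m / c ^+ (3 * n) = maxterm k c phi x n m.
Proof.
move=> c_gt0; have cn_ge0 : 0 <= (c ^+ (3 * n))^-1 by rewrite invr_ge0 exprn_ge0 ?ltW.
rewrite /maxterm [RHS](big_addn 0 _ n) addnK addn0.
rewrite (big_morph (fun t => t / c ^+ (3 * n)) (id1 := 0) (op1 := Num.max)); last by rewrite mul0r.
  apply: eq_bigr => j _.
  by rewrite -mulrnA -expnD addnC -mulrA -invfM -exprD -mulnDr addnC.
by move=> s t; rewrite !(mulrC _ (c ^+ (3 * n))^-1) maxr_pMr.
Qed.

End MaxTerm.

Lemma cvgn_lt (u : nat -> R) l e : u @ \oo --> l -> l < e ->
  exists N, forall n, (N <= n)%N -> u n < e.
Proof. by move=> /cvgr_lt /[apply] -[N _ uN]; exists N. Qed.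

Section Stability.
Variables (K : fieldType) (absK : K -> R) (X : lmodType K) (nrm : X -> R).
Variables (G : zmodType) (k : nat).
Hypotheses (habs : nonarch_abs absK) (hnrm : nonarch_norm absK nrm).
Hypothesis hk : absK (2 * k ^ 3)%N%:R != 0.

Local Notation c := (absK k%:R).
Local Notation d := (absK (2 * k ^ 3)%N%:R).
Local Notation q := (k%:R ^+ 3 : K).

Lemma natr_2k3 : (2 * k ^ 3)%N%:R = 2%:R * q :> K.
Proof. by rewrite natrM natrX. Qed.

Lemma natr2_neq0 : (2%:R : K) != 0.
Proof. by apply: contra hk; rewrite natr_2k3 => /eqP->; rewrite mul0r (abs0 habs). Qed.

Lemma natrk_neq0 : (k%:R : K) != 0.
Proof. by apply: contra hk; rewrite natr_2k3 => /eqP->; rewrite expr0n mulr0 (abs0 habs). Qed.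

Lemma absk_gt0 : 0 < c.
Proof. exact: (abs_gt0 habs natrk_neq0). Qed.

Lemma abs2k3_gt0 : 0 < d.
Proof. by rewrite lt_def hk (abs_ge0 habs). Qed.

Lemma abs_invqX n : absK ((q ^+ n)^-1) = (c ^+ (3 * n))^-1.
Proof. by rewrite (absV habs) ?expf_neq0 ?natrk_neq0 // !(absX habs) -exprM. Qed.

Section Approximation.
Variables (phi : G -> G -> R) (f : G -> X).
Hypothesis hf : forall x y, nrm (Dop k f x y) <= phi x y.
Hypothesis hphi : forall x y : G,
  (fun n : nat => phi (x *+ (k ^ n)) (y *+ (k ^ n)) / c ^+ (3 * n)) @ \oo --> (0 : R).

Definition approx n z := (q ^+ n)^-1 *: f (z *+ k ^ n).

Lemma approx0 z : approx 0 z = f z.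
Proof. by rewrite /approx expr0 invr1 scale1r expn0 mulr1n. Qed.

Lemma cubic_defect_le w : nrm (f (w *+ k) - q *: f w) <= phi w 0 / absK 2%:R.
Proof.
have -> : f (w *+ k) - q *: f w = (2%:R)^-1 *: Dop k f w 0.
  by rewrite Dop_y0 scalerA mulVf ?natr2_neq0 // scale1r.
by rewrite (nrmZ hnrm) (absV habs) ?natr2_neq0 // mulrC ler_wpM2r ?invr_ge0 ?(abs_ge0 habs).
Qed.

Lemma approx_succB_le n z :
  nrm (approx n.+1 z - approx n z) <= phi (z *+ k ^ n) 0 / c ^+ (3 * n) / d.
Proof.
have -> : approx n.+1 z - approx n z =
    (q ^+ n.+1)^-1 *: (f (z *+ k ^ n *+ k) - q *: f (z *+ k ^ n)).
  rewrite /approx scalerBr scalerA expnSr mulrnA exprSr invfM -mulrA.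
  by rewrite mulVf ?expf_neq0 ?natrk_neq0 // mulr1.
rewrite (nrmZ hnrm) abs_invqX.
suff -> : phi (z *+ k ^ n) 0 / c ^+ (3 * n) / d =
    (c ^+ (3 * n.+1))^-1 * (phi (z *+ k ^ n) 0 / absK 2%:R).
  by rewrite ler_wpM2l ?cubic_defect_le // invr_ge0 exprn_ge0 ?(abs_ge0 habs).
have a2_neq0 := lt0r_neq0 (abs_gt0 habs natr2_neq0).
have c_neq0 := lt0r_neq0 absk_gt0.
rewrite natr_2k3 (absM habs) (absX habs) mulnSr exprD.
by field; rewrite a2_neq0 c_neq0 expf_neq0.
Qed.

Lemma approx_f_le n z : nrm (approx n z - f z) <= maxterm k c phi z 0 n / d.
Proof.
rewrite -(approx0 z); apply: (nrm_telescope_le hnrm (u := approx ^~ z)) => // [|j /andP [_ jn]].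
  by rewrite divr_ge0 ?maxterm_ge0 ?(abs_ge0 habs).
apply: le_trans (approx_succB_le _ _) _.
by rewrite ler_wpM2r ?invr_ge0 ?(abs_ge0 habs) // le_maxterm // addn0.
Qed.

Lemma approx_cauchy z : forall e : R, 0 < e -> exists N, forall m n,
  (N <= m)%N -> (N <= n)%N -> nrm (approx m z - approx n z) < e.
Proof.
move=> e e_gt0; have e2d_gt0 : 0 < e / 2 * d by rewrite mulr_gt0 ?divr_gt0 ?abs2k3_gt0.
have := hphi z 0; under eq_fun do rewrite mul0rn.
move=> /cvgn_lt /(_ e2d_gt0) [N termN].
have near_N m : (N <= m)%N -> nrm (approx m z - approx N z) <= e / 2.
  move=> Nm; apply: (nrm_telescope_le hnrm (u := approx ^~ z)) => // [|j /andP [Nj _]]; first lra.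
  apply: le_trans (approx_succB_le _ _) _.
  by rewrite ler_pdivrMr ?abs2k3_gt0 // ltW // termN.
exists N => m n Nm Nn.
have -> : approx m z - approx n z = (approx m z - approx N z) - (approx n z - approx N z).
  by rewrite opprB addrA subrK.
by apply: le_lt_trans (nrmB_le habs hnrm (near_N _ Nm) (near_N _ Nn)) _ => //; lra.
Qed.

Lemma approx_cvg : complete_norm nrm -> exists C, forall z, nrm_cvg nrm (approx ^~ z) (C z).
Proof.
move=> hcomp; have [C approxC] := choice (fun z => hcomp _ (approx_cauchy z)).
by exists C.
Qed.

Lemma approx_limit_cubic C : (forall z, nrm_cvg nrm (approx ^~ z) (C z)) -> cubic k C.
Proof.
move=> uC x y; apply/(nrm_eq0 hnrm)/eqP; rewrite eq_le (nrm_ge0 habs hnrm) andbT.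
apply/ler_addgt0Pr => e e_gt0; rewrite add0r -[Dop k C x y]subr0.
apply: (nrm_cvg_le habs hnrm (nrm_cvg_Dop habs hnrm _ _ _ uC)).
have [N HN] := cvgn_lt (hphi x y) e_gt0; exists N => n /HN phiN.
rewrite subr0 /approx Dop_scale_natmul (nrmZ hnrm) abs_invqX mulrC.
by apply: le_trans (ltW phiN); rewrite ler_wpM2r ?invr_ge0 ?exprn_ge0 ?(abs_ge0 habs).
Qed.

Lemma approx_limit_le C (phit : G -> R) :
  (forall x, (fun n : nat => maxterm k c phi x 0 n) @ \oo --> phit x) ->
  (forall z, nrm_cvg nrm (approx ^~ z) (C z)) -> forall z, nrm (C z - f z) <= phit z / d.
Proof.
move=> hphit uC z; apply: (nrm_cvg_le habs hnrm (uC z)); exists 0%N => n _.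
apply: le_trans (approx_f_le n z) _.
rewrite ler_wpM2r ?invr_ge0 ?(abs_ge0 habs) // -(cvg_lim (@Rhausdorff R) (hphit z)).
by apply: nondecreasing_cvgn_le; [exact: maxterm_homo | exact: cvgP (hphit z)].
Qed.

End Approximation.

Section Uniqueness.
Variables (phi : G -> G -> R) (phit : G -> R).
Hypothesis hphit : forall x, (fun n : nat => maxterm k c phi x 0 n) @ \oo --> phit x.

Lemma phit_natmul_expn x N L : (fun n => maxterm k c phi x N n) @ \oo --> L ->
  phit (x *+ k ^ N) / c ^+ (3 * N) = L.
Proof.
move=> hL; have hphitN : (fun n => maxterm k c phi x N n) @ \oo --> phit (x *+ k ^ N) / c ^+ (3 * N).
  under eq_fun do rewrite -(maxterm_shift k phi x N _ absk_gt0).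
  by apply: cvgM; [exact: hphit | exact: cvg_cst].
exact: (cvg_unique (@Rhausdorff R) hphitN hL).
Qed.

Lemma cubic_approx_unique (f : G -> X) C C' :
  (forall x, exists L : nat -> R,
     (forall i, (fun n => maxterm k c phi x i n) @ \oo --> L i) /\ L @ \oo --> (0 : R)) ->
  cubic k C -> cubic k C' ->
  (forall x, nrm (C x - f x) <= phit x / d) -> (forall x, nrm (C' x - f x) <= phit x / d) ->
  C' = C.
Proof.
move=> hL hC hC' Cf C'f; apply: funext => x; have [L [hLi hL0]] := hL x.
have CC'_le N : nrm (C' x - C x) <= L N / d.
  set x0 := x *+ k ^ N.
  have -> : C' x - C x = (q ^+ N)^-1 *: (C' x0 - C x0).
    rewrite /x0 !(cubic_homogeneous natr2_neq0) // -scalerBr scalerA.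
    by rewrite mulVf ?expf_neq0 ?natrk_neq0 // scale1r.
  have C'C_x0 : nrm (C' x0 - C x0) <= phit x0 / d.
    have -> : C' x0 - C x0 = (C' x0 - f x0) - (C x0 - f x0) by rewrite opprB addrA subrK.
    exact: (nrmB_le habs hnrm).
  rewrite (nrmZ hnrm) abs_invqX -(phit_natmul_expn (hLi N)) mulrC mulrAC.
  by rewrite ler_wpM2r ?invr_ge0 ?exprn_ge0 ?(abs_ge0 habs).
have Ld0 : (fun N => L N / d) @ \oo --> (0 : R).
  by rewrite -(mul0r d^-1); apply: cvgM; [exact: hL0 | exact: cvg_cst].
apply/subr0_eq/(nrm_eq0 hnrm)/le_anti; rewrite (nrm_ge0 habs hnrm) andbT.
by apply: (cvgr_to_ge Ld0); apply: nearW.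
Qed.

End Uniqueness.
End Stability.

Theorem theorem2p1 (K : fieldType) (absK : K -> R)
  (habs : nonarch_abs absK) (hnt : nontrivial_abs absK)
  (X : lmodType K) (nrm : X -> R)
  (hnrm : nonarch_norm absK nrm) (hcomp : complete_norm nrm)
  (G : zmodType) (k : nat)
  (hk : absK ((2 * k ^ 3)%N%:R) != 0)
  (phi : G -> G -> R) (hphi0 : forall x y, 0 <= phi x y)
  (hphi : forall x y : G,
     (fun n : nat => phi (x *+ (k ^ n)) (y *+ (k ^ n)) / absK (k%:R) ^+ (3 * n))
       @ \oo --> (0 : R))
  (phit : G -> R)
  (hphit : forall x : G,
     (fun n : nat => maxterm k (absK (k%:R)) phi x 0 n) @ \oo --> phit x)
  (f : G -> X)
  (hf : forall x y, nrm (Dop k f x y) <= phi x y) :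
  exists C : G -> X,
    [/\ cubic k C,
        (forall x, nrm (C x - f x) <= phit x / absK ((2 * k ^ 3)%N%:R)) &
        ((forall x : G, exists L : nat -> R,
            (forall i, (fun n : nat => maxterm k (absK (k%:R)) phi x i n)
                         @ \oo --> L i) /\ L @ \oo --> (0 : R)) ->
         forall C' : G -> X, cubic k C' ->
           (forall x, nrm (C' x - f x) <= phit x / absK ((2 * k ^ 3)%N%:R)) ->
           C' = C)].
Proof.
have [C approxC] := approx_cvg habs hnrm hk hf hphi hcomp.
have Ccubic := approx_limit_cubic habs hnrm hk hf hphi approxC.
have Cf := approx_limit_le habs hnrm hk hf hphit approxC.
exists C; split=> // hL C' C'cubic C'f.
exact: (cubic_approx_unique habs hnrm hk hphit hL Ccubic C'cubic Cf C'f).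
Qed.
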